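(* Let $B_1,\dots,B_n$ be components with pairwise disjoint action sets and $\gamma$ a set of interactions over them. Then $\mathcal{E}(\gamma)$ is an inductive predicate of the system $\|_\gamma B_i^h$: whenever a state $s$ of $\|_\gamma B_i^h$ satisfies $\mathcal{E}(\gamma)$, every successor of $s$ by a time transition or by a discrete transition (executing some interaction of $\gamma$) satisfies $\mathcal{E}(\gamma)$.
   Context: Components and their semantics: a component is a timed automaton $B=(L,A,\mathcal{X},T,\mathsf{tpc},s_0)$ with locations $L$, actions $A$, clocks $\mathcal{X}$, edges $(l,(a,g,r),l')\in T$ (action $a$, clock-constraint guard $g$, reset set $r$), time progress conditions $\mathsf{tpc}(l)$ and initial configuration $s_0=(l_0,c_0)$; states $(l,\mathbf{v})$ with $\mathbf{v}$ a valuation of clocks in $\mathbb{R}_{\ge0}$; time transitions $(l,\mathbf{v})\xrightarrow{\delta}(l,\mathbf{v}+\delta)$ allowed if $\mathsf{tpc}(l)$ holds along $[0,\delta]$; discrete transitions $(l,\mathbf{v})\xrightarrow{a}(l',\mathbf{v}[r])$ if $(l,(a,g,r),l')\in T$, $\mathbf{v}\models g$, $\mathbf{v}[r]\models\mathsf{tpc}(l')$ ($\mathbf{v}[r]$ resets clocks in $r$ to $0$). A state predicate is inductive if whenever it holds in a state it holds in all its time and discrete successors. Interactions and systems: for components $B_i=(L_i,A_i,\mathcal{X}_i,T_i,\mathsf{tpc}_i,(l_{0i},c_{0i}))$ with pairwise disjoint action sets, an interaction is a nonempty set $\alpha\subseteq\bigcup_iA_i$ containing at most one action of each component; $\mathit{Act}(\gamma)=\bigcup_{\alpha\in\gamma}\alpha$.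 The system $\|_\gamma B_i$ is the component with locations $\times_iL_i$, actions $\gamma$, clocks $\bigcup_i\mathcal{X}_i$, $\mathsf{tpc}(\bar l)=\bigwedge_i\mathsf{tpc}_i(l_i)$, initial configuration $((l_{01},\dots,l_{0n}),\bigwedge_ic_{0i})$, and an edge $(\bar l,(\alpha,\bigwedge_{i\in I}g_i,\bigcup_{i\in I}r_i),\bar l')$ whenever $\alpha=\{a_i\}_{i\in I}\in\gamma$, $(l_i,(a_i,g_i,r_i),l'_i)\in T_i$ for $i\in I$, and $l'_i=l_i$ for $i\notin I$. History clocks: $B^h$ is obtained from $B$ by adding fresh clocks $h_0$ and $h_a$ ($a\in A$), adding $h_a$ to the reset set of every edge labelled $a$, and strengthening the initial constraint to $c_0\wedge h_0=0\wedge\bigwedge_{a\in A}h_a>0$. In $\|_\gamma B_i^h$ the clock $h_0$ (never reset nor tested) is shared by all components; all other clocks are local. Interaction inequalities: for a set of interactions $\gamma$ and a set of actions $\alpha$, $\gamma\ominus\alpha=\{\beta\setminus\alpha\mid\beta\in\gamma,\ \beta\not\subseteq\alpha\}$. Define recursively $\mathcal{E}(\emptyset)=\mathit{true}$ and, for $\gamma\neq\emptyset$, $\mathcal{E}(\gamma)=\bigvee_{\alpha\in\gamma}\Big(\bigwedge_{a_i,a_j\in\alpha}h_{a_i}=h_{a_j}\ \wedge\bigwedge_{a_i\in\alpha,\ a_k\in\mathit{Act}(\gamma\ominus\alpha)}h_{a_i}\le h_{a_k}\ \wedge\ \mathcal{E}(\gamma\ominus\alpha)\Big)$. *)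

(* Time domain: an arbitrary real field R (the paper uses the reals). *)
From HB Require Import structures.
From mathcomp Require Import all_boot all_order all_algebra.
Set Implicit Arguments. Unset Strict Implicit. Unset Printing Implicit Defensive.
Import Order.TTheory GRing.Theory Num.Theory.
Local Open Scope ring_scope.

Section TimedAutomata.
Variable R : realFieldType.

(* A component B = (L, A, X, T, tpc, s0).  Guards, time progress conditions
   and initial clock constraints are predicates on clock valuations;
   reset sets are boolean predicates on clocks. *)
Unset Implicit Arguments.
Record component := Component {
  loc : Type;
  act : finType;
  clk : Type;
  edge : loc -> act -> ((clk -> R) -> Prop) -> (clk -> bool) -> loc -> Prop;
  tpc : loc -> (clk -> R) -> Prop;
  init_loc : loc;
  init_cstr : (clk -> R) -> Prop
}.
Set Implicit Arguments.

Definition state (B : component) := (loc B * (clk B -> R))%type.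

Definition is_state (B : component) (s : state B) := forall x, 0 <= s.2 x.

Definition shift (X : Type) (v : X -> R) (d : R) : X -> R := fun x => v x + d.
Definition reset (X : Type) (v : X -> R) (r : X -> bool) : X -> R :=
  fun x => if r x then 0 else v x.

Inductive time_step (B : component) : state B -> R -> state B -> Prop :=
| TimeStep l v d :
    0 <= d ->
    (forall t, 0 <= t <= d -> tpc B l (shift v t)) ->
    time_step (l, v) d (l, shift v d).

Inductive disc_step (B : component) : state B -> act B -> state B -> Prop :=
| DiscStep l v a g r l' :
    edge B l a g r l' -> g v -> tpc B l' (reset v r) ->
    disc_step (l, v) a (l', reset v r).

Definition inductive (B : component) (P : state B -> Prop) : Prop :=
  forall s : state B, is_state s -> P s ->
    (forall d s', time_step s d s' -> P s') /\
    (forall a s', disc_step s a s' -> P s').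

(* History clocks: B^h.  Clocks of B^h are  X + {h_0} + {h_a | a in A}, *)
(* encoded as  inl x,  inr None  (= h_0),  inr (Some a)  (= h_a).       *)

Definition hclk (B : component) := (clk B + option (act B))%type.

Definition hreset (B : component) (r : clk B -> bool) (a : act B) : hclk B -> bool :=
  fun c => match c with
           | inl x => r x
           | inr None => false
           | inr (Some b) => b == a
           end.

Definition hist (B : component) : component :=
  {| loc := loc B;
     act := act B;
     clk := hclk B;
     edge := fun l a g' r' l' =>
       exists (g : (clk B -> R) -> Prop) (r : clk B -> bool),
         edge B l a g r l' /\
         g' = (fun v => g (fun x => v (inl x))) /\
         r' = hreset r a;
     tpc := fun l v => tpc B l (fun x => v (inl x));
     init_loc := init_loc B;
     init_cstr := fun v =>
       init_cstr B (fun x => v (inl x)) /\ v (inr None) = 0 /\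
       (forall a, 0 < v (inr (Some a)))
  |}.

(* Actions of the B_i are kept pairwise disjoint by tagging them with   *)
(* the component index: the union of the action sets is the sigma type. *)

Section System.
Variables (n : nat) (B : 'I_n -> component).

Definition sact := {i : 'I_n & act (B i)}.

Definition interaction (alpha : {set sact}) : Prop :=
  alpha != set0 /\
  (forall x y, x \in alpha -> y \in alpha -> tag x = tag y -> x = y).

(* Clocks of the system: union of the clocks of the B_i^h, where h_0 is
   shared and all other clocks are local. *)
Inductive sclk : Type :=
| CLoc (i : 'I_n) (x : clk (B i))
| CH0
| CHa (a : sact).

Definition emb (i : 'I_n) (c : hclk (B i)) : sclk :=
  match c with
  | inl x => CLoc x
  | inr None => CH0
  | inr (Some a) => CHa (existT _ i a)
  end.

Definition part (alpha : {set sact}) (i : 'I_n) : bool :=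
  [exists a : act (B i), existT _ i a \in alpha].

Definition sreset (alpha : {set sact}) (rs : forall i, hclk (B i) -> bool)
  : sclk -> bool :=
  fun c => match c with
           | CLoc i x => part alpha i && rs i (inl x)
           | CH0 => [exists i, part alpha i && rs i (inr None)]
           | CHa s => part alpha (tag s) && rs (tag s) (inr (Some (tagged s)))
           end.

Definition sys (gamma : {set {set sact}}) : component :=
  {| loc := forall i : 'I_n, loc (B i);
     act := {set sact};
     clk := sclk;
     edge := fun l alpha g r l' =>
       alpha \in gamma /\
       exists (gs : forall i, (hclk (B i) -> R) -> Prop)
              (rs : forall i, hclk (B i) -> bool),
         (forall i, if part alpha i then
                      exists a : act (B i), existT _ i a \in alpha /\
                        edge (hist (B i)) (l i) a (gs i) (rs i) (l' i)
                    else l' i = l i) /\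
         g = (fun v => forall i, part alpha i -> gs i (fun c => v (emb c))) /\
         r = sreset alpha rs;
     tpc := fun l v => forall i, tpc (hist (B i)) (l i) (fun c => v (emb c));
     init_loc := fun i => init_loc (B i);
     init_cstr := fun v => forall i, init_cstr (hist (B i)) (fun c => v (emb c))
  |}.

Definition ominus (gamma : {set {set sact}}) (alpha : {set sact}) : {set {set sact}} :=
  [set beta :\: alpha | beta in [set beta in gamma | ~~ (beta \subset alpha)]].

Definition Acts (gamma : {set {set sact}}) : {set sact} := \bigcup_(beta in gamma) beta.

(* E(gamma), defined by recursion with fuel; since #|gamma (-) alpha| < #|gamma|
   for alpha in gamma, the fuel #|gamma| suffices and Eint unfolds to the
   recursive definition of the paper. *)
Fixpoint Efuel (k : nat) (gamma : {set {set sact}}) (v : sclk -> R) : Prop :=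
  match k with
  | 0 => True
  | k'.+1 =>
    if gamma == set0 then True else
    exists2 alpha, alpha \in gamma &
      (forall ai aj, ai \in alpha -> aj \in alpha -> v (CHa ai) = v (CHa aj)) /\
      (forall ai ak, ai \in alpha -> ak \in Acts (ominus gamma alpha) ->
                     v (CHa ai) <= v (CHa ak)) /\
      Efuel k' (ominus gamma alpha) v
  end.

Definition Eint (gamma : {set {set sact}}) (v : sclk -> R) : Prop :=
  Efuel #|gamma| gamma v.

End System.
End TimedAutomata.

Arguments inductive {R} B P.

(* A time step adds the same delay to every history clock, so all the
   (in)equalities of E(gamma) are preserved.  A discrete step executing alpha
   resets exactly the history clocks of alpha to 0 (each component of alpha
   contributes one action, and interactions have at most one action per
   component); these are then equal and minimal, so alpha can be taken as the
   first disjunct of E(gamma).  What remains, E(gamma (-) alpha), only mentions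
   clocks the step leaves untouched, and E(gamma) implies E(gamma (-) beta)
   for every beta. *)
From HB Require Import structures.
From mathcomp Require Import all_boot all_order all_algebra.
Set Implicit Arguments. Unset Strict Implicit. Unset Printing Implicit Defensive.
Import Order.TTheory GRing.Theory Num.Theory.
Local Open Scope ring_scope.

Section InteractionInequalities.
Variables (R : realFieldType) (n : nat) (B : 'I_n -> component R).
Implicit Types (gamma : {set {set sact B}}) (alpha beta : {set sact B})
  (v w : sclk B -> R).

Lemma card_ominus_lt gamma alpha :
  alpha \in gamma -> (#|ominus gamma alpha| < #|gamma|)%N.
Proof.
move=> ag; apply: leq_ltn_trans (leq_imset_card _ _) _.
apply: proper_card; apply/properP; split.
  by apply/subsetP => x; rewrite inE => /andP[].
by exists alpha => //; rewrite inE subxx andbF.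
Qed.

Lemma ominus0 alpha : ominus (set0 : {set {set sact B}}) alpha = set0.
Proof. by apply/setP => x; rewrite inE; apply/imsetP => -[y]; rewrite !inE. Qed.

Lemma ominus_ominus gamma alpha beta :
  ominus (ominus gamma alpha) beta = ominus gamma (alpha :|: beta).
Proof.
apply/setP => x; apply/imsetP/imsetP.
- move=> [y]; rewrite inE => /andP[/imsetP[d]].
  rewrite inE => /andP[dg _] -> ndb ->.
  by exists d; rewrite ?setDDl // inE dg -subDset ndb.
- move=> [d]; rewrite inE => /andP[dg ndab] ->.
  exists (d :\: alpha); last by rewrite setDDl.
  rewrite inE subDset ndab andbT; apply/imsetP; exists d => //.
  by rewrite inE dg; apply: contra ndab => /subset_trans; apply; apply: subsetUl.
Qed.

Lemma Acts_ominus_sub gamma alpha : Acts (ominus gamma alpha) \subset Acts gamma.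
Proof.
apply/subsetP => x /bigcupP[y /imsetP[d]]; rewrite inE => /andP[dg _] ->.
by rewrite inE => /andP[_ xd]; apply/bigcupP; exists d.
Qed.

Lemma Efuel_set0 k v : Efuel k set0 v.
Proof. by case: k => //= k; rewrite eqxx. Qed.

Lemma Efuel_fuel k1 k2 gamma v : (#|gamma| <= k1)%N -> (#|gamma| <= k2)%N ->
  Efuel k1 gamma v <-> Efuel k2 gamma v.
Proof.
elim: k1 k2 gamma => [|k1 IH] [|k2] g h1 h2.
- by [].
- by move: h1; rewrite leqn0 cards_eq0 => /eqP ->; split=> _; apply: Efuel_set0.
- by move: h2; rewrite leqn0 cards_eq0 => /eqP ->; split=> _; apply: Efuel_set0.
rewrite /=; case: ifP => // _.
by split=> -[a ag [H1 [H2 H3]]]; exists a => //; do 2 split => //;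
  (apply/IH; last exact: H3); rewrite -ltnS; apply: leq_trans (card_ominus_lt ag) _.
Qed.

Lemma EintE gamma v : gamma != set0 ->
  Eint gamma v <-> exists2 alpha, alpha \in gamma &
    (forall ai aj, ai \in alpha -> aj \in alpha -> v (CHa ai) = v (CHa aj)) /\
    (forall ai ak, ai \in alpha -> ak \in Acts (ominus gamma alpha) ->
                   v (CHa ai) <= v (CHa ak)) /\
    Eint (ominus gamma alpha) v.
Proof.
move=> g0; have lt a : a \in gamma -> (#|ominus gamma a| < #|gamma|)%N.
  exact: card_ominus_lt.
rewrite /Eint; case E: #|gamma| lt => [|m] lt.
  by move: g0; rewrite -cards_eq0 E.
rewrite /= (negbTE g0).
by split=> -[a ag [H1 [H2 H3]]]; exists a => //; do 2 split => //;
  (apply/Efuel_fuel; last exact: H3); rewrite // -ltnS; apply: lt.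
Qed.

Lemma Efuel_eq_Acts k gamma v w :
  (forall a, a \in Acts gamma -> v (CHa a) = w (CHa a)) ->
  Efuel k gamma v -> Efuel k gamma w.
Proof.
elim: k gamma => [|k IH] g vw //=; case: ifP => // _.
move=> [alpha ag [H1 [H2 H3]]]; exists alpha => //.
have in_alpha a : a \in alpha -> a \in Acts g by move=> aa; apply/bigcupP; exists alpha.
have in_rest a : a \in Acts (ominus g alpha) -> a \in Acts g
  by apply: (subsetP (Acts_ominus_sub _ _)).
split; [|split].
- move=> ai aj ia ja; rewrite -(vw ai (in_alpha _ ia)) -(vw aj (in_alpha _ ja)).
  exact: H1.
- move=> ai ak ia ka; rewrite -(vw ai (in_alpha _ ia)) -(vw ak (in_rest _ ka)).
  exact: H2.
- by apply: IH H3 => a /in_rest; apply: vw.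
Qed.

Lemma Efuel_shift k gamma v d : Efuel k gamma v -> Efuel k gamma (shift v d).
Proof.
elim: k gamma => [|k IH] g //=; case: ifP => // _.
move=> [alpha ag [H1 [H2 H3]]]; exists alpha => //; split; [|split].
- by move=> ai aj ia ja; rewrite /shift (H1 ai aj).
- by move=> ai ak ia ka; rewrite /shift lerD2r; apply: H2.
- exact: IH.
Qed.

Lemma Eint_ominus gamma v beta : Eint gamma v -> Eint (ominus gamma beta) v.
Proof.
move: {2}#|gamma| (leqnn #|gamma|) => N.
elim: N gamma beta => [|N IH] g beta hN Hg.
  by move: hN; rewrite leqn0 cards_eq0 => /eqP ->; rewrite ominus0; apply: Efuel_set0.
have [->|gb0] := eqVneq (ominus g beta) set0; first exact: Efuel_set0.
have g0 : g != set0 by apply: contraNneq gb0 => ->; rewrite ominus0.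
move/(EintE v g0): Hg => [alpha ag [H1 [H2 H3]]].
have hN' : (#|ominus g alpha| <= N)%N.
  by rewrite -ltnS; apply: leq_trans (card_ominus_lt ag) hN.
have [sab|nsab] := boolP (alpha \subset beta).
  by rewrite -(setUidPr sab) -ominus_ominus; apply: IH.
apply/(EintE v gb0); exists (alpha :\: beta).
  by apply/imsetP; exists alpha; rewrite // inE ag.
have -> : ominus (ominus g beta) (alpha :\: beta) = ominus (ominus g alpha) beta.
  rewrite !ominus_ominus; congr ominus; apply/setP => x; rewrite !inE.
  by case: (x \in alpha); case: (x \in beta).
split; [|split].
- by move=> ai aj; rewrite !inE => /andP[_ ia] /andP[_ ja]; apply: H1.
- move=> ai ak; rewrite inE => /andP[_ ia] ka; apply: H2 => //.
  exact: (subsetP (Acts_ominus_sub _ beta)).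
- exact: IH.
Qed.

Lemma sys_edge_reset_hist gamma l alpha g r l' a :
  interaction alpha -> edge R (sys gamma) l alpha g r l' -> r (CHa a) = (a \in alpha).
Proof.
case: a => i b [_ one_per_comp] [_ [gs [rs [Hloc [_ ->]]]]] /=.
have := Hloc i; rewrite /part; case: existsP => [_|nex _]; last first.
  by apply/esym/negP => ba; apply: nex; exists b.
move=> [a [aa [g0 [r0 [_ [_ ->]]]]]] /=.
have [->|nba] := eqVneq b a; first by rewrite aa.
apply/esym/negbTE; apply: contra nba => ba; apply/eqP.
exact: eq_from_Tagged (one_per_comp _ _ ba aa erefl).
Qed.

End InteractionInequalities.

Theorem proposition2 (R : realFieldType) (n : nat) (B : 'I_n -> component R)
  (gamma : {set {set sact B}})
  (Hgamma : forall alpha, alpha \in gamma -> interaction alpha) :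
  inductive (sys gamma) (fun s => Eint gamma s.2).
Proof.
move=> s Hs HE; split.
  by move=> d s' step; case: step HE => l v {}d _ _; apply: Efuel_shift.
move=> alpha s' step; case: step Hs HE => l v {}alpha g r l' Hedge _ _ Hs HE /=.
have ag : alpha \in gamma by case: Hedge.
have hreset a : r (CHa a) = (a \in alpha).
  exact: sys_edge_reset_hist (Hgamma _ ag) Hedge.
apply/EintE; first by apply/set0Pn; exists alpha.
exists alpha => //; split; [|split].
- by move=> ai aj ia ja; rewrite /reset !hreset ia ja.
- by move=> ai ak ia _; rewrite /reset !hreset ia; case: ifP => // _; apply: Hs.
- apply: Efuel_eq_Acts (Eint_ominus alpha HE).
  move=> a /bigcupP[_ /imsetP[d _ ->]]; rewrite inE => /andP[na _].
  by rewrite /reset hreset (negbTE na).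
Qed.
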